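(* If $G$ is a graph of diameter $d$ and metric dimension $k$, then \[\frac{TC(\mathcal{H}(G))-1}{d}\leq k\leq TC(\mathcal{H}(G)).\]
   Context: A set $R$ of vertices of a graph $G$ is a resolving set if for each pair $u,v$ of distinct vertices there is $x\in R$ with $d(x,u)\neq d(x,v)$; the metric dimension is the smallest size of a resolving set. The distance hypergraph $\mathcal{H}(G)$ has vertex set $V(G)$ and, as hyperedges, all balls $B(v,r)=\{u: d(u,v)\leq r\}$ for all $v\in V(G)$ and all integers $r\geq 0$. A test cover of a hypergraph is a set of hyperedges such that every vertex lies in one of them and for every pair of distinct vertices one of them contains exactly one of the two; $TC(\cdot)$ denotes the minimum size of a test cover. *)

From mathcomp Require Import all_boot all_order all_algebra.
Set Implicit Arguments. Unset Strict Implicit. Unset Printing Implicit Defensive.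

Definition simple_graph (T : finType) (e : rel T) : Prop :=
  symmetric e /\ irreflexive e.

Fixpoint walkb (T : finType) (e : rel T) (n : nat) (x y : T) : bool :=
  match n with
  | 0 => x == y
  | n'.+1 => [exists z, e x z && walkb e n' z y]
  end.

Definition connected_graph (T : finType) (e : rel T) : Prop :=
  forall x y : T, exists n, walkb e n x y.

(* Graph distance: the least n such that there is a walk of length n
   from x to y.  In a connected graph this least n is < #|T|, so the
   search range iota 0 #|T| is exhaustive. *)
Definition dist (T : finType) (e : rel T) (x y : T) : nat :=
  find (fun n => walkb e n x y) (iota 0 #|T|).

Definition diameter (T : finType) (e : rel T) : nat :=
  \max_(x : T) \max_(y : T) dist e x y.

Definition resolving (T : finType) (e : rel T) (R : {set T}) : Prop :=
  forall u v : T, u != v -> exists2 x, x \in R & dist e x u != dist e x v.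

Definition is_metric_dimension (T : finType) (e : rel T) (k : nat) : Prop :=
  (exists R : {set T}, resolving e R /\ #|R| = k) /\
  (forall R : {set T}, resolving e R -> k <= #|R|).

Definition ball (T : finType) (e : rel T) (v : T) (r : nat) : {set T} :=
  [set u | dist e v u <= r].

Definition distance_hyperedge (T : finType) (e : rel T) (H : {set T}) : Prop :=
  exists v r, H = ball e v r.

Definition test_cover (T : finType) (E : {set T} -> Prop) (S : {set {set T}}) : Prop :=
  [/\ forall H, H \in S -> E H,
      forall x : T, exists2 H, H \in S & x \in H &
      forall x y : T, x != y -> exists2 H, H \in S & (x \in H) != (y \in H)].

Definition is_TC (T : finType) (E : {set T} -> Prop) (tc : nat) : Prop :=
  (exists S, test_cover E S /\ #|S| = tc) /\
  (forall S, test_cover E S -> tc <= #|S|).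

From mathcomp Require Import all_boot all_order all_algebra.
Import Order.TTheory GRing.Theory Num.Theory.

Set Implicit Arguments.
Unset Strict Implicit.
Unset Printing Implicit Defensive.

(* k <= TC: the centres of the balls of a test cover resolve
   the graph, since a ball B(v, r) containing exactly one of u, w forces
   d(v, u) != d(v, w).  TC <= k d + 1: if R resolves, then for x in R the
   balls B(x, r), r < d, already separate every pair resolved by x (take
   r = min (d(x, u), d(x, w)) < d); one more ball of radius d covers all
   vertices. *)

Lemma exists_small_witness_set (A : eqType) (B : finType) (P : A -> B -> Prop)
    (s : seq A) :
  {in s, forall a, exists b, P a b} ->
  exists2 R : {set B}, (#|R| <= size s)%N & {in s, forall a, exists2 b, b \in R & P a b}.
Proof.
elim: s => [|a s IHs] hs.
  by exists set0; rewrite ?cards0.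
have [|R cardR hR] := IHs; first by move=> a' sa'; apply: hs; rewrite inE sa' orbT.
have [b Pab] := hs a (mem_head a s).
exists (b |: R).
  by rewrite cardsU1 /= -add1n leq_add ?leq_b1.
move=> a'; rewrite inE => /predU1P [-> | sa']; first by exists b; rewrite ?setU11.
by have [b' Rb' Pb'] := hR a' sa'; exists b'; rewrite ?setU1r.
Qed.

Section DistanceHypergraph.

Variables (T : finType) (e : rel T).

Lemma dist_le_diameter (x y : T) : (dist e x y <= diameter e)%N.
Proof.
apply: leq_trans (leq_bigmax (F := fun y => dist e x y) y) _.
exact: (leq_bigmax (F := fun x => \max_y dist e x y) x).
Qed.

Lemma resolving_ball_centers (S : {set {set T}}) (R : {set T}) :
  (forall u w : T, u != w -> exists2 H, H \in S & (u \in H) != (w \in H)) ->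
  {in S, forall H, exists2 v, v \in R & exists r, H = ball e v r} ->
  resolving e R.
Proof.
move=> sepS centresR u w uw; have [H SH sepH] := sepS u w uw.
have [v Rv [r defH]] := centresR H SH.
by exists v => //; apply: contra sepH; rewrite defH !inE => /eqP ->.
Qed.

Lemma metric_dimension_le_TC (k tc : nat) :
  is_metric_dimension e k -> is_TC (distance_hyperedge e) tc -> (k <= tc)%N.
Proof.
move=> [_ minR] [[S [[ballsS _ sepS] <-]] _].
have [|R cardR centresR] :=
  @exists_small_witness_set _ _ (fun H v => exists r, H = ball e v r) (enum S).
  by move=> H; rewrite mem_enum => /ballsS.
have resR : resolving e R.
  by apply: resolving_ball_centers sepS _ => H; rewrite -mem_enum; apply: centresR.
by rewrite cardE (leq_trans (minR R resR)).
Qed.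

Lemma ball_separates (x u w : T) : (dist e x u < dist e x w)%N ->
  (u \in ball e x (dist e x u)) != (w \in ball e x (dist e x u)).
Proof. by rewrite !inE leqnn -ltnNge => ->. Qed.

Definition short_balls (R : {set T}) (d : nat) : {set {set T}} :=
  [set ball e p.1 p.2 | p : T * 'I_d in setX R [set: 'I_d]].

Lemma card_short_balls (R : {set T}) (d : nat) : (#|short_balls R d| <= #|R| * d)%N.
Proof. by apply: leq_trans (leq_imset_card _ _) _; rewrite cardsX cardsT card_ord. Qed.

Lemma short_balls_separate_lt (R : {set T}) (x u w : T) :
  x \in R -> (dist e x u < dist e x w)%N ->
  exists2 H, H \in short_balls R (diameter e) & (u \in H) != (w \in H).
Proof.
move=> Rx lt_uw; have lt_d := leq_trans lt_uw (dist_le_diameter x w).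
exists (ball e x (Ordinal lt_d)); last exact: ball_separates.
by apply/imsetP; exists (x, Ordinal lt_d); rewrite ?inE ?Rx.
Qed.

Lemma short_balls_separate (R : {set T}) : resolving e R ->
  forall u w : T, u != w ->
  exists2 H, H \in short_balls R (diameter e) & (u \in H) != (w \in H).
Proof.
move=> resR u w uw; have [x Rx] := resR u w uw.
rewrite neq_ltn => /orP [lt_uw | lt_wu]; first exact: short_balls_separate_lt lt_uw.
by have [H SH sepH] := short_balls_separate_lt Rx lt_wu; exists H; rewrite // eq_sym.
Qed.

Lemma short_balls_test_cover (R : {set T}) (x0 : T) : resolving e R ->
  test_cover (distance_hyperedge e) (ball e x0 (diameter e) |: short_balls R (diameter e)).
Proof.
move=> resR; split.
- move=> H /setU1P [->|/imsetP [p _ ->]]; first by exists x0, (diameter e).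
  by exists p.1, p.2.
- move=> x; exists (ball e x0 (diameter e)); first exact: setU11.
  by rewrite inE dist_le_diameter.
- move=> u w uw; have [H SH sepH] := short_balls_separate resR uw.
  by exists H; rewrite ?setU1r.
Qed.

Lemma TC_le_metric_dimension_mul_diameter (k tc : nat) :
  is_metric_dimension e k -> is_TC (distance_hyperedge e) tc ->
  (tc <= k * diameter e + 1)%N.
Proof.
move=> [[R [resR <-]] _] [_ minS].
have [x0 _ | T0] := pickP T; last first.
  apply: leq_trans (minS set0 _) _; last by rewrite cards0.
  by split=> [H|x|x]; [rewrite inE | have := T0 x | have := T0 x].
apply: leq_trans (minS _ (short_balls_test_cover x0 resR)) _.
by rewrite cardsU1 addnC leq_add ?leq_b1 ?card_short_balls.
Qed.

End DistanceHypergraph.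

Local Open Scope ring_scope.

(* When the diameter is 0,
   the left-hand side is 0 because x / 0 = 0. *)
Theorem proposition3 (T : finType) (e : rel T) (k tc : nat) :
  simple_graph e -> connected_graph e ->
  is_metric_dimension e k ->
  is_TC (distance_hyperedge e) tc ->
  ((tc%:R - 1) / (diameter e)%:R <= (k%:R : rat)) /\ (k <= tc)%N.
Proof.
move=> _ _ mdk tck; split; last exact: metric_dimension_le_TC mdk tck.
have tc_le := TC_le_metric_dimension_mul_diameter mdk tck.
have [->|d_gt0] := posnP (diameter e); first by rewrite invr0 mulr0 ler0n.
by rewrite ler_pdivrMr ?ltr0n // lerBlDr -natrM natr1 ler_nat -addn1.
Qed.
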